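(* Let the parametric setting, finite element spaces, lifts, finite element solutions and reduced basis solutions be as in the context, and fix $\mu\in\mathcal{D}$. Let $u(\mu)\in V_g(\mu)$ be the exact solution of the weak primal problem and $\sigma(\mu)\in\Sigma_{fg}(\mu)$ the exact solution of the dual problem. Then $$|\!|\!|u(\mu)-u_h(\mu)|\!|\!|_\mu\le|\!|\!|u(\mu)-u^N_{rb}(\mu)|\!|\!|_\mu,\qquad \|\sigma(\mu)-\sigma_h(\mu)\|_{R,\mu}\le\|\sigma(\mu)-\sigma^N_{rb}(\mu)\|_{R,\mu},$$ $$|\!|\!|(u(\mu)-u_h(\mu),\sigma(\mu)-\sigma_h(\mu))|\!|\!|_\mu\le|\!|\!|(u(\mu)-u^N_{rb}(\mu),\sigma(\mu)-\sigma^N_{rb}(\mu))|\!|\!|_\mu.$$ If moreover $\mu\in S_N$, all three inequalities are equalities.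
   Context: Setting: $\Omega\subset\mathbb{R}^d$ ($d=2,3$) bounded polyhedral Lipschitz; $(\cdot,\cdot)$ the (possibly vector) $L^2(\Omega)$ inner product, $\|\cdot\|_0$ its norm, $(\cdot,\cdot)_\Gamma$ the $L^2$ product on $\Gamma\subset\partial\Omega$. $V$ a Hilbert space compactly embedded in $L^2(\Omega)$, $\Lambda:V\to L^2(\Omega)$ linear continuous, $\Lambda^t$ its formal adjoint, $\Sigma=\{\tau\in L^2(\Omega):\Lambda^t\tau\in L^2(\Omega)\}$, traces $\mathrm{tr}_0$ on $V$, $\mathrm{tr}_1$ on $\Sigma$ with $(\tau,\Lambda v)-(\Lambda^t\tau,v)=(\mathrm{tr}_1\tau,\mathrm{tr}_0v)_{\partial\Omega}$. $\partial\Omega=\overline\Gamma_D\cup\overline\Gamma_N$ disjoint, $\mathrm{meas}(\Gamma_D)\ne0$. $V_0=\{v\in V:\mathrm{tr}_0v=0\text{ on }\Gamma_D\}$, $\Sigma_0=\{\tau\in\Sigma:\mathrm{tr}_1\tau=0\text{ on }\Gamma_N\}$, $\Sigma_{00}=\{\tau\in\Sigma_0:\Lambda^t\tau=0\}$; $\|\Lambda v\|_0\ge c_3\|v\|_0$ on $V_0$; continuous inf-sup $\sup_{\tau\in\Sigma}\frac{(\Lambda^t\tau,v)}{\|\tau\|_0+\|\Lambda^t\tau\|_0}\ge\beta\|v\|_0$. Parameters $\mu$ range over a set $\mathcal{D}$; for each $\mu$, $\mathcal{A}(\mu)$ is self-adjoint on $L^2(\Omega)$ with $c_1\|q\|_0^2\le(\mathcal{A}(\mu)q,q)\le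 c_2\|q\|_0^2$, and data $f(\mu),g_D(\mu),g_N(\mu)\in L^2$ describe $\Lambda^t(\mathcal{A}(\mu)\Lambda u)=f(\mu)$, $\mathrm{tr}_0u=g_D(\mu)$ on $\Gamma_D$, $-\mathrm{tr}_1(\mathcal{A}(\mu)\Lambda u)=g_N(\mu)$ on $\Gamma_N$. $a(v,w;\mu)=(\mathcal{A}(\mu)\Lambda v,\Lambda w)$, $b(\rho,\tau;\mu)=(\mathcal{A}(\mu)^{-1}\rho,\tau)$, $c((\rho,w),(\tau,v);\mu)=b(\rho,\tau;\mu)+(\Lambda^t\tau,w)+(\Lambda^t\rho,v)$. $V_g(\mu)=\{v\in V:\mathrm{tr}_0v=g_D(\mu)\text{ on }\Gamma_D\}$, $\Sigma_{fg}(\mu)=\{\tau\in\Sigma:\Lambda^t\tau=-f(\mu),\ \mathrm{tr}_1\tau=g_N(\mu)\text{ on }\Gamma_N\}$. Exact solutions: $u(\mu)\in V_g(\mu)$ with $a(u(\mu),v;\mu)=(f(\mu),v)-(g_N(\mu),\mathrm{tr}_0v)_{\Gamma_N}$ for all $v\in V_0$; $\sigma(\mu)\in\Sigma_{fg}(\mu)$ with $b(\sigma(\mu),\tau;\mu)=-(\mathrm{tr}_1\tau,g_D(\mu))_{\Gamma_D}$ for all $\tau\in\Sigma_{00}$. Norms: $|\!|\!|v|\!|\!|_\mu=\sqrt{a(v,v;\mu)}$, $\|\tau\|_{R,\mu}=\sqrt{b(\tau,\tau;\mu)}$, $|\!|\!|(v,\tau)|\!|\!|_\mu=\sqrt{|\!|\!|v|\!|\!|_\mu^2+\|\tau\|_{R,\mu}^2}$.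 Finite elements: $V_h\subset V$, $D_h\subset L^2(\Omega)$, $\Sigma_h\subset\Sigma$ finite element spaces with $\Lambda^t\Sigma_h=D_h$ and the pair $(\Sigma_h,D_h)$ satisfying a discrete inf-sup condition; $V_{0,h}=V_h\cap V_0$, $\Sigma_{0,h}=\Sigma_h\cap\Sigma_0$. For each $\mu$ fixed lifts $u_g(\mu)\in V_h\cap V_g(\mu)$ and $\sigma_{fg}(\mu)\in\Sigma_h\cap\Sigma_{fg}(\mu)$ are given (data assumed compatible so these exist, and $f(\mu)\in D_h$). Let $\varphi(v;\mu)=(f(\mu),v)-(g_N(\mu),\mathrm{tr}_0v)_{\Gamma_N}-a(u_g(\mu),v;\mu)$ and $\psi(\tau;\mu)=-(\mathrm{tr}_1\tau,g_D(\mu))_{\Gamma_D}-b(\sigma_{fg}(\mu),\tau;\mu)$. FE primal solution: $u_h(\mu)=u_{0,h}(\mu)+u_g(\mu)$ with $u_{0,h}(\mu)\in V_{0,h}$ and $a(u_{0,h}(\mu),v;\mu)=\varphi(v;\mu)$ for all $v\in V_{0,h}$. FE dual solution: $\sigma_h(\mu)=\sigma_{00,h}(\mu)+\sigma_{fg}(\mu)$ where $(\sigma_{00,h}(\mu),w_h)\in\Sigma_{0,h}\times D_h$ solves $c((\sigma_{00,h}(\mu),w_h),(\tau,v);\mu)=\psi(\tau;\mu)$ for all $(\tau,v)\in\Sigma_{0,h}\times D_h$. Reduced basis: $S_N=\{\mu_i\}_{i=1}^N\subset\mathcal{D}$, $V^N_{rb}=\mathrm{span}\{u_{0,h}(\mu_i)\}_{i=1}^N$,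 $\Sigma^N_{rb}=\mathrm{span}\{\sigma_{00,h}(\mu_i)\}_{i=1}^N$ (snapshots computed with the same lifts). RB primal solution: $u^N_{rb}(\mu)=u^N_{0,rb}(\mu)+u_g(\mu)$ with $u^N_{0,rb}(\mu)\in V^N_{rb}$, $a(u^N_{0,rb}(\mu),v;\mu)=\varphi(v;\mu)$ for all $v\in V^N_{rb}$. RB dual solution: $\sigma^N_{rb}(\mu)=\sigma^N_{00,rb}(\mu)+\sigma_{fg}(\mu)$ with $\sigma^N_{00,rb}(\mu)\in\Sigma^N_{rb}$, $b(\sigma^N_{00,rb}(\mu),\tau;\mu)=\psi(\tau;\mu)$ for all $\tau\in\Sigma^N_{rb}$. *)

From HB Require Import structures.
From mathcomp Require Import all_boot all_order all_algebra.
From mathcomp Require Import all_classical all_reals.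
Set Implicit Arguments. Unset Strict Implicit. Unset Printing Implicit Defensive.
Import Order.TTheory GRing.Theory Num.Theory.
Local Open Scope classical_set_scope.
Local Open Scope ring_scope.

Section LinAlg.
Variable R : realType.

Definition semi_inner_product (T : lmodType R) (ip : T -> T -> R) : Prop :=
  (forall x y, ip x y = ip y x) /\
  (forall (a : R) x y z, ip (a *: x + y) z = a * ip x z + ip y z) /\
  (forall x, 0 <= ip x x).

Definition inner_product (T : lmodType R) (ip : T -> T -> R) : Prop :=
  semi_inner_product ip /\ (forall x, ip x x = 0 -> x = 0).

Definition ipnorm (T : lmodType R) (ip : T -> T -> R) (x : T) : R :=
  Num.sqrt (ip x x).

Definition subspace (T : lmodType R) (X : set T) : Prop :=
  X 0 /\ (forall (a : R) x y, X x -> X y -> X (a *: x + y)).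

Definition fspan (T : lmodType R) (n : nat) (e : 'I_n -> T) : set T :=
  [set x | exists c : 'I_n -> R, x = \sum_(i < n) c i *: e i].

Definition finite_dim (T : lmodType R) (X : set T) : Prop :=
  exists n (e : 'I_n -> T), X = fspan e.
End LinAlg.

(*  HV : the L^2 space containing V, f, Lambda^t tau  (L^2(Omega))     *)
(*  HS : the (possibly vector) L^2 space containing Lambda v, Sigma    *)
(*  HB : L^2(partial Omega); ipD / ipN are the L^2 products on         *)
(*       Gamma_D / Gamma_N, and ipD + ipN is the product on the        *)
(*       whole boundary.                                               *)
Record setting (R : realType) (P : Type) (HV HS HB : lmodType R) := Setting {
  ipV : HV -> HV -> R;
  ipV_ip : inner_product ipV;
  ipS : HS -> HS -> R;
  ipS_ip : inner_product ipS;
  ipD : HB -> HB -> R;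
  ipN : HB -> HB -> R;
  ipD_sip : semi_inner_product ipD;
  ipN_sip : semi_inner_product ipN;
  ipB_ip : inner_product (fun x y => ipD x y + ipN x y);
  GammaD_nontriv : exists w, ipD w w != 0;
  (* the space V, identified with its image in L^2 *)
  Vsp : set HV;
  Vsp_sub : subspace Vsp;
  Lam : {linear HV -> HS};
  Lamt : {linear HS -> HV};
  Sig : set HS;
  Sig_sub : subspace Sig;
  tr0 : {linear HV -> HB};
  tr1 : {linear HS -> HB};
  green : forall tau v, Sig tau -> Vsp v ->
    ipS tau (Lam v) - ipV (Lamt tau) v
      = ipD (tr1 tau) (tr0 v) + ipN (tr1 tau) (tr0 v);
  c3 : R;
  c3_gt0 : 0 < c3;
  poincare : forall v, Vsp v -> ipD (tr0 v) (tr0 v) = 0 ->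
    ipnorm ipS (Lam v) >= c3 * ipnorm ipV v;
  beta : R;
  beta_gt0 : 0 < beta;
  infsup : forall v : HV,
    sup [set ipV (Lamt tau) v / (ipnorm ipS tau + ipnorm ipV (Lamt tau))
        | tau in Sig] >= beta * ipnorm ipV v;
  Aop : P -> {linear HS -> HS};
  Ainv : P -> {linear HS -> HS};
  AinvK : forall mu q, Ainv mu (Aop mu q) = q;
  AK : forall mu q, Aop mu (Ainv mu q) = q;
  A_selfadj : forall mu p q, ipS (Aop mu p) q = ipS p (Aop mu q);
  c1 : R; c2 : R;
  c1_gt0 : 0 < c1;
  c2_gt0 : 0 < c2;
  A_bounds : forall mu q,
    c1 * ipS q q <= ipS (Aop mu q) q /\ ipS (Aop mu q) q <= c2 * ipS q q;
  fdat : P -> HV;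
  gD : P -> HB;
  gN : P -> HB
}.

Section Derived.
Variables (R : realType) (P : Type) (HV HS HB : lmodType R).
Variable S : @setting R P HV HS HB.

(* "w = 0 on Gamma_D" means the L^2(Gamma_D) norm of w vanishes *)
Definition V0 : set HV :=
  [set v | Vsp S v /\ ipD S (tr0 S v) (tr0 S v) = 0].
Definition Sig0 : set HS :=
  [set tau | Sig S tau /\ ipN S (tr1 S tau) (tr1 S tau) = 0].
Definition Sig00 : set HS :=
  [set tau | Sig0 tau /\ Lamt S tau = 0].
Definition Vg (mu : P) : set HV :=
  [set v | Vsp S v /\
     ipD S (tr0 S v - gD S mu) (tr0 S v - gD S mu) = 0].
Definition Sigfg (mu : P) : set HS :=
  [set tau | Sig S tau /\ Lamt S tau = - fdat S mu /\
     ipN S (tr1 S tau - gN S mu) (tr1 S tau - gN S mu) = 0].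

Definition aform (mu : P) (v w : HV) : R := ipS S (Aop S mu (Lam S v)) (Lam S w).
Definition bform (mu : P) (rho tau : HS) : R := ipS S (Ainv S mu rho) tau.
Definition cform (mu : P) (rw tv : HS * HV) : R :=
  bform mu rw.1 tv.1 + ipV S (Lamt S tv.1) rw.2 + ipV S (Lamt S rw.1) tv.2.

Definition primal_rhs (mu : P) (v : HV) : R :=
  ipV S (fdat S mu) v - ipN S (gN S mu) (tr0 S v).
Definition dual_rhs (mu : P) (tau : HS) : R :=
  - ipD S (tr1 S tau) (gD S mu).

Definition phi (ug : P -> HV) (mu : P) (v : HV) : R :=
  primal_rhs mu v - aform mu (ug mu) v.
Definition psi (sfg : P -> HS) (mu : P) (tau : HS) : R :=
  dual_rhs mu tau - bform mu (sfg mu) tau.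

Definition enorm (mu : P) (v : HV) : R := Num.sqrt (aform mu v v).
Definition rnorm (mu : P) (tau : HS) : R := Num.sqrt (bform mu tau tau).
Definition pnorm (mu : P) (v : HV) (tau : HS) : R :=
  Num.sqrt (enorm mu v ^+ 2 + rnorm mu tau ^+ 2).
End Derived.

Record fe_spaces (R : realType) (P : Type) (HV HS HB : lmodType R)
    (S : @setting R P HV HS HB) := FESpaces {
  Vh : set HV;
  Dh : set HV;
  Sh : set HS;
  Vh_sub : subspace Vh;
  Dh_sub : subspace Dh;
  Sh_sub : subspace Sh;
  Vh_fin : finite_dim Vh;
  Dh_fin : finite_dim Dh;
  Sh_fin : finite_dim Sh;
  Vh_V : Vh `<=` Vsp S;
  Sh_Sig : Sh `<=` Sig S;
  Lamt_Sh : Lamt S @` Sh = Dh;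
  betah : R;
  betah_gt0 : 0 < betah;
  infsup_h : forall v, Dh v ->
    sup [set ipV S (Lamt S tau) v /
             (ipnorm (ipS S) tau + ipnorm (ipV S) (Lamt S tau)) | tau in Sh]
      >= betah * ipnorm (ipV S) v
}.

Definition V0h (R : realType) (P : Type) (HV HS HB : lmodType R)
  (S : @setting R P HV HS HB) (F : fe_spaces S) : set HV :=
  Vh F `&` V0 S.
Definition Sig0h (R : realType) (P : Type) (HV HS HB : lmodType R)
  (S : @setting R P HV HS HB) (F : fe_spaces S) : set HS :=
  Sh F `&` Sig0 S.

From HB Require Import structures.
From mathcomp Require Import all_boot all_order all_algebra.
From mathcomp Require Import all_classical all_reals.
Set Implicit Arguments. Unset Strict Implicit. Unset Printing Implicit Defensive.
Import Order.TTheory GRing.Theory Num.Theory.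
Local Open Scope classical_set_scope.
Local Open Scope ring_scope.

(* Both discretisations are Galerkin projections for a symmetric positive
   semidefinite form: the finite element solution is the projection onto the
   finite element space W (V_{0,h}, resp. the divergence-free part of
   Sigma_{0,h}, which contains the mixed solution), and the reduced basis
   solution the projection onto the span X of snapshots, a subspace of W.
   Galerkin orthogonality gives the Pythagorean identity
   |E - rb|^2 = |E - w|^2 + |w - rb|^2,  hence the inequalities; when mu is a
   snapshot parameter, w lies in X and w - rb is orthogonal to itself, hence
   the equalities. *)

Lemma fspanB (R : realType) (T : lmodType R) N (g : 'I_N -> T) x y :
  fspan g x -> fspan g y -> fspan g (x - y).
Proof.
move=> [c ->] [d ->]; exists (fun i => c i - d i).
by rewrite -sumrB; apply: eq_bigr => i _; rewrite scalerBl.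
Qed.

Lemma fspan_gen (R : realType) (T : lmodType R) N (g : 'I_N -> T) i :
  fspan g (g i).
Proof.
exists (fun j => (j == i)%:R).
rewrite (bigD1 i) //= eqxx scale1r big1 ?addr0 // => j /negbTE ->.
by rewrite scale0r.
Qed.

Section SemiInnerProduct.
Variables (R : realType) (T : lmodType R) (f : T -> T -> R).
Hypothesis f_sip : semi_inner_product f.

Lemma sipC x y : f x y = f y x.
Proof. by case: f_sip. Qed.

Lemma sip_ge0 x : 0 <= f x x.
Proof. by case: f_sip => _ []. Qed.

Lemma sipZlD a x y z : f (a *: x + y) z = a * f x z + f y z.
Proof. by case: f_sip => _ []. Qed.

Lemma sip0l z : f 0 z = 0.
Proof.
have := sipZlD 1 0 0 z; rewrite scale1r addr0 mul1r => h.
by apply: (addrI (f 0 z)); rewrite addr0 -h.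
Qed.

Lemma sip0r z : f z 0 = 0.
Proof. by rewrite sipC sip0l. Qed.

Lemma sipDl x y z : f (x + y) z = f x z + f y z.
Proof. by rewrite -[x in LHS]scale1r sipZlD mul1r. Qed.

Lemma sipBl x y z : f (x - y) z = f x z - f y z.
Proof.
by rewrite -scaleN1r addrC sipZlD mulN1r addrC.
Qed.

Lemma sipDr x y z : f z (x + y) = f z x + f z y.
Proof. by rewrite sipC sipDl !(sipC z). Qed.

Lemma sipBr x y z : f z (x - y) = f z x - f z y.
Proof. by rewrite sipC sipBl !(sipC z). Qed.

Lemma sip_fspan_orthr N (g : 'I_N -> T) x y :
  (forall i, f x (g i) = 0) -> fspan g y -> f x y = 0.
Proof.
move=> xg [c ->]; rewrite sipC.
apply: (big_rec (fun z => f z x = 0)); first exact: sip0l.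
by move=> i z _ hz; rewrite sipZlD hz sipC xg mulr0 addr0.
Qed.

Section GalerkinProjection.
Variables (W : set T) (N : nat) (g : 'I_N -> T) (E w rb : T).
Hypotheses (gW : forall i, W (g i)) (wW : W w).
Hypothesis E_w_orth : forall v, W v -> f (E - w) v = 0.
Hypothesis rb_span : fspan g rb.
Hypothesis E_rb_orth : forall i, f (E - rb) (g i) = 0.

Lemma galerkin_orth_rb_gap : f (E - w) (w - rb) = 0.
Proof.
rewrite sipBr (E_w_orth wW) (sip_fspan_orthr _ rb_span) ?subr0 // => i.
exact: E_w_orth.
Qed.

Lemma galerkin_pythagoras :
  f (E - rb) (E - rb) = f (E - w) (E - w) + f (w - rb) (w - rb).
Proof.
have -> : E - rb = (E - w) + (w - rb) by rewrite addrA subrK.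
move: (E - w) (w - rb) galerkin_orth_rb_gap => e d gap.
by rewrite sipDl !sipDr gap (sipC d) gap addr0 add0r.
Qed.

Lemma galerkin_le : f (E - w) (E - w) <= f (E - rb) (E - rb).
Proof. by rewrite galerkin_pythagoras lerDl sip_ge0. Qed.

Lemma galerkin_eq : fspan g w -> f (E - w) (E - w) = f (E - rb) (E - rb).
Proof.
move=> w_span; rewrite galerkin_pythagoras.
suff -> : f (w - rb) (w - rb) = 0 by rewrite addr0.
rewrite {1}(_ : w - rb = (E - rb) - (E - w)); last first.
  by rewrite opprB [RHS]addrC addrA subrK.
rewrite sipBl galerkin_orth_rb_gap (sip_fspan_orthr E_rb_orth) ?subrr //.
exact: fspanB.
Qed.

End GalerkinProjection.
End SemiInnerProduct.

Section ParametricForms.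
Variables (R : realType) (P : Type) (HV HS HB : lmodType R).
Variables (S : @setting R P HV HS HB) (mu : P).

Let ipS_sip : semi_inner_product (ipS S) := (ipS_ip S).1.

Lemma aform_sip : semi_inner_product (aform S mu).
Proof.
rewrite /aform; split; [|split].
- by move=> x y; rewrite A_selfadj (sipC ipS_sip).
- by move=> a x y z; rewrite !linearP (sipZlD ipS_sip).
- move=> x; have [c1_le _] := A_bounds S mu (Lam S x).
  by apply: le_trans c1_le; rewrite mulr_ge0 ?(ltW (c1_gt0 S)) ?(sip_ge0 ipS_sip).
Qed.

Lemma bform_sip : semi_inner_product (bform S mu).
Proof.
rewrite /bform; split; [|split].
- by move=> x y; rewrite -{1}(AK S mu y) -A_selfadj AK (sipC ipS_sip).
- by move=> a x y z; rewrite !linearP (sipZlD ipS_sip).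
- move=> x; rewrite -{2}(AK S mu x) -A_selfadj.
  have [c1_le _] := A_bounds S mu (Ainv S mu x).
  by apply: le_trans c1_le; rewrite mulr_ge0 ?(ltW (c1_gt0 S)) ?(sip_ge0 ipS_sip).
Qed.

Variables (ug : P -> HV) (sfg : P -> HS).

Lemma aform_galerkin_orth u w v :
  aform S mu u v = primal_rhs S mu v -> aform S mu w v = phi S ug mu v ->
  aform S mu (u - ug mu - w) v = 0.
Proof. by move=> hu hw; rewrite !(sipBl aform_sip) hu hw subrr. Qed.

Lemma bform_galerkin_orth sigma s tau :
  bform S mu sigma tau = dual_rhs S mu tau -> bform S mu s tau = psi S sfg mu tau ->
  bform S mu (sigma - sfg mu - s) tau = 0.
Proof. by move=> hsigma hs; rewrite !(sipBl bform_sip) hsigma hs subrr. Qed.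

Definition Sig00h (F : fe_spaces S) : set HS := Sh F `&` Sig00 S.

Section MixedSolution.
Variables (F : fe_spaces S) (s : HS) (w : HV).
Hypothesis s_Sig0h : Sig0h F s.
Hypothesis mixed_eq : forall tau v, Sig0h F tau -> Dh F v ->
  cform S mu (s, w) (tau, v) = psi S sfg mu tau.

(* Testing with (0, Lamt s) gives |Lamt s|^2 = 0, using Lamt Sigma_h = D_h. *)
Lemma mixed_Sig00h : Sig00h F s.
Proof.
have [s_Sh s_Sig0] := s_Sig0h; split=> //; split=> //.
have Sig0h0 : Sig0h F 0.
  split; first exact: (Sh_sub F).1.
  by split; [exact: (Sig_sub S).1 | rewrite linear0 (sip0l (ipN_sip S))].
have DhLs : Dh F (Lamt S s) by rewrite -(Lamt_Sh F); exists s.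
apply: (ipV_ip S).2; have := mixed_eq Sig0h0 DhLs.
rewrite /cform /psi /dual_rhs /bform /= !linear0 (sip0l (ipD_sip S)).
by rewrite (sip0l (ipV_ip S).1) !(sip0r ipS_sip) oppr0 !add0r.
Qed.

Lemma mixed_galerkin tau : Sig00h F tau -> bform S mu s tau = psi S sfg mu tau.
Proof.
move=> [tau_Sh [tau_Sig0 Ltau0]].
have := mixed_eq (conj tau_Sh tau_Sig0) (Dh_sub F).1.
by rewrite /cform /= Ltau0 (sip0l (ipV_ip S).1) (sip0r (ipV_ip S).1) !addr0.
Qed.

End MixedSolution.
End ParametricForms.

Section ReducedBasis.
Variables (R : realType) (P : Type) (HV HS HB : lmodType R).
Variables (S : @setting R P HV HS HB) (F : fe_spaces S).
Variables (N : nat) (mus : 'I_N -> P) (mu : P).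

Section Primal.
Variables (ug : P -> HV) (u0h : P -> HV) (u u0rb : HV).
Hypothesis u0h_V0h : forall nu, V0h F (u0h nu).
Hypothesis u0h_galerkin : forall v, V0h F v -> aform S mu (u0h mu) v = phi S ug mu v.
Hypothesis u_weak : forall v, V0 S v -> aform S mu u v = primal_rhs S mu v.
Hypothesis u0rb_span : fspan (fun i => u0h (mus i)) u0rb.
Hypothesis u0rb_galerkin : forall v, fspan (fun i => u0h (mus i)) v ->
  aform S mu u0rb v = phi S ug mu v.

Let u_orth v : V0h F v -> aform S mu (u - ug mu - u0h mu) v = 0.
Proof. by move=> hv; apply: aform_galerkin_orth; [exact: u_weak hv.2 | exact: u0h_galerkin]. Qed.

Let u_rb_orth i : aform S mu (u - ug mu - u0rb) (u0h (mus i)) = 0.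
Proof.
apply: aform_galerkin_orth; first exact: u_weak (u0h_V0h (mus i)).2.
exact: u0rb_galerkin (fspan_gen _ i).
Qed.

Lemma primal_fe_le_rb :
  aform S mu (u - ug mu - u0h mu) (u - ug mu - u0h mu)
    <= aform S mu (u - ug mu - u0rb) (u - ug mu - u0rb).
Proof.
exact: (galerkin_le (aform_sip S mu) (g := fun i => u0h (mus i))
  (fun i => u0h_V0h (mus i)) (u0h_V0h mu) u_orth u0rb_span).
Qed.

Lemma primal_fe_eq_rb : (exists i, mu = mus i) ->
  aform S mu (u - ug mu - u0h mu) (u - ug mu - u0h mu)
    = aform S mu (u - ug mu - u0rb) (u - ug mu - u0rb).
Proof.
move=> [i mu_i]; apply: (galerkin_eq (aform_sip S mu) (g := fun i => u0h (mus i))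
  (fun i => u0h_V0h (mus i)) (u0h_V0h mu) u_orth u0rb_span u_rb_orth).
by rewrite mu_i; exact: fspan_gen.
Qed.

End Primal.

Section Dual.
Variables (sfg : P -> HS) (s00h : P -> HS) (wh : P -> HV) (sigma s00rb : HS).
Hypothesis s00h_Sig0h : forall nu, Sig0h F (s00h nu).
Hypothesis s00h_mixed : forall nu tau v, Sig0h F tau -> Dh F v ->
  cform S nu (s00h nu, wh nu) (tau, v) = psi S sfg nu tau.
Hypothesis sigma_weak : forall tau, Sig00 S tau -> bform S mu sigma tau = dual_rhs S mu tau.
Hypothesis s00rb_span : fspan (fun i => s00h (mus i)) s00rb.
Hypothesis s00rb_galerkin : forall tau, fspan (fun i => s00h (mus i)) tau ->
  bform S mu s00rb tau = psi S sfg mu tau.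

Let s00h_Sig00h nu : Sig00h F (s00h nu).
Proof. exact: mixed_Sig00h (s00h_Sig0h nu) (s00h_mixed nu). Qed.

Let sigma_orth tau : Sig00h F tau -> bform S mu (sigma - sfg mu - s00h mu) tau = 0.
Proof.
move=> htau; apply: bform_galerkin_orth; first exact: sigma_weak htau.2.
exact: mixed_galerkin (s00h_mixed mu) _ htau.
Qed.

Let sigma_rb_orth i : bform S mu (sigma - sfg mu - s00rb) (s00h (mus i)) = 0.
Proof.
apply: bform_galerkin_orth; first exact: sigma_weak (s00h_Sig00h (mus i)).2.
exact: s00rb_galerkin (fspan_gen _ i).
Qed.

Lemma dual_fe_le_rb :
  bform S mu (sigma - sfg mu - s00h mu) (sigma - sfg mu - s00h mu)
    <= bform S mu (sigma - sfg mu - s00rb) (sigma - sfg mu - s00rb).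
Proof.
exact: (galerkin_le (bform_sip S mu) (g := fun i => s00h (mus i))
  (fun i => s00h_Sig00h (mus i)) (s00h_Sig00h mu) sigma_orth s00rb_span).
Qed.

Lemma dual_fe_eq_rb : (exists i, mu = mus i) ->
  bform S mu (sigma - sfg mu - s00h mu) (sigma - sfg mu - s00h mu)
    = bform S mu (sigma - sfg mu - s00rb) (sigma - sfg mu - s00rb).
Proof.
move=> [i mu_i]; apply: (galerkin_eq (bform_sip S mu) (g := fun i => s00h (mus i))
  (fun i => s00h_Sig00h (mus i)) (s00h_Sig00h mu) sigma_orth s00rb_span sigma_rb_orth).
by rewrite mu_i; exact: fspan_gen.
Qed.

End Dual.
End ReducedBasis.

Unset Implicit Arguments.
Theorem theorem5p7 (R : realType) (P : Type) (HV HS HB : lmodType R)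
  (S : @setting R P HV HS HB) (F : fe_spaces S)
  (* lifts and data compatibility *)
  (ug : P -> HV) (sfg : P -> HS)
  (hug : forall mu, Vh F (ug mu) /\ Vg S mu (ug mu))
  (hsfg : forall mu, Sh F (sfg mu) /\ Sigfg S mu (sfg mu))
  (hf : forall mu, Dh F (fdat S mu))
  (* FE primal solutions u_h = u0h + ug *)
  (u0h : P -> HV)
  (hu0h : forall mu, V0h F (u0h mu) /\
     forall v, V0h F v -> aform S mu (u0h mu) v = phi S ug mu v)
  (* FE dual solutions sigma_h = s00h + sfg *)
  (s00h : P -> HS) (wh : P -> HV)
  (hs00h : forall mu, Sig0h F (s00h mu) /\ Dh F (wh mu) /\
     forall tau v, Sig0h F tau -> Dh F v ->
       cform S mu (s00h mu, wh mu) (tau, v) = psi S sfg mu tau)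
  (* reduced basis snapshots S_N *)
  (N : nat) (mus : 'I_N -> P)
  (mu : P)
  (* exact solutions *)
  (u : HV)
  (hu : Vg S mu u /\ forall v, V0 S v -> aform S mu u v = primal_rhs S mu v)
  (sigma : HS)
  (hsigma : Sigfg S mu sigma /\
     forall tau, Sig00 S tau -> bform S mu sigma tau = dual_rhs S mu tau)
  (* RB solutions *)
  (u0rb : HV)
  (hu0rb : fspan (fun i => u0h (mus i)) u0rb /\
     forall v, fspan (fun i => u0h (mus i)) v ->
       aform S mu u0rb v = phi S ug mu v)
  (s00rb : HS)
  (hs00rb : fspan (fun i => s00h (mus i)) s00rb /\
     forall tau, fspan (fun i => s00h (mus i)) tau ->
       bform S mu s00rb tau = psi S sfg mu tau) :
  enorm S mu (u - (u0h mu + ug mu)) <= enorm S mu (u - (u0rb + ug mu)) /\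
  rnorm S mu (sigma - (s00h mu + sfg mu)) <= rnorm S mu (sigma - (s00rb + sfg mu)) /\
  pnorm S mu (u - (u0h mu + ug mu)) (sigma - (s00h mu + sfg mu))
    <= pnorm S mu (u - (u0rb + ug mu)) (sigma - (s00rb + sfg mu)) /\
  ((exists i, mu = mus i) ->
    enorm S mu (u - (u0h mu + ug mu)) = enorm S mu (u - (u0rb + ug mu)) /\
    rnorm S mu (sigma - (s00h mu + sfg mu)) = rnorm S mu (sigma - (s00rb + sfg mu)) /\
    pnorm S mu (u - (u0h mu + ug mu)) (sigma - (s00h mu + sfg mu))
      = pnorm S mu (u - (u0rb + ug mu)) (sigma - (s00rb + sfg mu))).
Proof.
have a_ge0 := sip_ge0 (aform_sip S mu); have b_ge0 := sip_ge0 (bform_sip S mu).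
have u_le := primal_fe_le_rb (fun nu => (hu0h nu).1) (hu0h mu).2 hu.2 hu0rb.1.
have u_eq := primal_fe_eq_rb (fun nu => (hu0h nu).1) (hu0h mu).2 hu.2 hu0rb.1 hu0rb.2.
have sigma_le := dual_fe_le_rb (fun nu => (hs00h nu).1) (fun nu => (hs00h nu).2.2)
  hsigma.2 hs00rb.1.
have sigma_eq := dual_fe_eq_rb (fun nu => (hs00h nu).1) (fun nu => (hs00h nu).2.2)
  hsigma.2 hs00rb.1 hs00rb.2.
have err (T : lmodType R) (x y z : T) : x - (y + z) = x - z - y.
  by rewrite opprD addrA addrAC.
rewrite /pnorm /enorm /rnorm !err !sqr_sqrtr //.
split; [exact: ler_wsqrtr | split; [exact: ler_wsqrtr | split]].
  by apply: ler_wsqrtr; apply: lerD.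
by move=> mu_S; rewrite u_eq ?sigma_eq.
Qed.
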